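(* Let $\Phi_1,\Phi_2,\Phi_3,\Psi_1,\Psi_2,\Psi_3:\mathbb{Z}^3\to\mathbb{Q}$ be the functions defined in the context. (a) For all integers $a,b,c$ and each $i\in\{1,2,3\}$, \[ \Phi_i(a,b,c)\,\Phi_i(a-2,b-3,c-2)=\Phi_i(a-1,b-1,c)\,\Phi_i(a-1,b-2,c-2)+\Phi_i(a-2,b-2,c-1)\,\Phi_i(a,b-1,c-1) \] and \[ \Psi_i(a,b,c)\,\Psi_i(a-2,b-3,c-2)=\Psi_i(a-1,b-1,c)\,\Psi_i(a-1,b-2,c-2)+\Psi_i(a-2,b-2,c-1)\,\Psi_i(a,b-1,c-1). \] (b) For all integers $a,b,c$ and each $i\in\{1,2,3\}$, \[ \Phi_i(a,b,c)\,\Phi_i(a-2,b-3,c-2)=\Psi_{4-i}(c,b-1,a-1)\,\Phi_i(a-1,b-2,c-2)+\Phi_i(a-2,b-2,c-1)\,\Phi_i(a,b-1,c-1) \] and \[ \Psi_i(a,b,c)\,\Psi_i(a-2,b-3,c-2)=\Phi_{4-i}(c,b-1,a-1)\,\Psi_i(a-1,b-2,c-2)+\Psi_i(a-2,b-2,c-1)\,\Psi_i(a,b-1,c-1). \]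
   Context: For integers $a,b,c$ define $g(a,b,c)=(b-a)(b-c)+\left\lfloor\frac{(a-c)^2}{3}\right\rfloor$, $q(a,b,c)=\left\lfloor\frac{(a-b+c)^2}{4}\right\rfloor$, $\alpha(a,b,c)=2$ if $3b+a-c\equiv 1\pmod 6$, $\alpha(a,b,c)=3$ if $3b+a-c\equiv 5\pmod 6$, and $\alpha(a,b,c)=1$ otherwise; $\beta(a,b,c)=3$ if $3b+a-c\equiv 1\pmod 6$, $\beta(a,b,c)=2$ if $3b+a-c\equiv 5\pmod 6$, and $\beta(a,b,c)=1$ otherwise. Writing $g=g(a,b,c)$, $q=q(a,b,c)$ and $r=\lfloor (a-c+1)/3\rfloor$, define (exponents may be negative, so values are rational) $\Phi_1(a,b,c)=\alpha(a,b,c)\,2^{g(a,b,c+1)}5^{g}11^{q}$, $\Phi_2(a,b,c)=\alpha(a,b,c)\,2^{g(a,b,c-1)-r+(a-b)}5^{g}11^{q}$, $\Phi_3(a,b,c)=\alpha(a,b,c)\,2^{g(a,b,c-1)-r}5^{g}11^{q}$, $\Psi_1(a,b,c)=\beta(a,b,c)\,2^{g(a,b,c-1)}5^{g}11^{q}$, $\Psi_2(a,b,c)=\beta(a,b,c)\,2^{g(a,b,c+1)+r-(a-b)}5^{g}11^{q}$, $\Psi_3(a,b,c)=\beta(a,b,c)\,2^{g(a,b,c+1)+r}5^{g}11^{q}$. *)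

From HB Require Import structures.
From mathcomp Require Import all_boot all_order all_algebra.
Set Implicit Arguments. Unset Strict Implicit. Unset Printing Implicit Defensive.
Import Order.TTheory GRing.Theory Num.Theory.
Local Open Scope ring_scope.

(* Integer floor division by a positive constant: intdiv's (m %/ d)%Z with
   d > 0 is the floor of m/d (remainder (m %% d)%Z is in [0,d)). *)

Definition g (a b c : int) : int := (b - a) * (b - c) + (((a - c) ^+ 2) %/ 3)%Z.
Definition q (a b c : int) : int := (((a - b + c) ^+ 2) %/ 4)%Z.
Definition r (a c : int) : int := ((a - c + 1) %/ 3)%Z.

Definition alpha (a b c : int) : rat :=
  if ((3 * b + a - c) %% 6)%Z == 1 then 2
  else if ((3 * b + a - c) %% 6)%Z == 5 then 3 else 1.
Definition beta (a b c : int) : rat :=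
  if ((3 * b + a - c) %% 6)%Z == 1 then 3
  else if ((3 * b + a - c) %% 6)%Z == 5 then 2 else 1.

Definition common (a b c : int) : rat :=
  (5%:Q) ^ (g a b c) * (11%:Q) ^ (q a b c).

(* Phi i for i = 1,2,3 (value 0 for other i, never used) *)
Definition Phi (i : nat) (a b c : int) : rat :=
  match i with
  | 1 => alpha a b c * (2%:Q) ^ (g a b (c + 1)) * common a b c
  | 2 => alpha a b c * (2%:Q) ^ (g a b (c - 1) - r a c + (a - b)) * common a b c
  | 3 => alpha a b c * (2%:Q) ^ (g a b (c - 1) - r a c) * common a b c
  | _ => 0
  end.

Definition Psi (i : nat) (a b c : int) : rat :=
  match i with
  | 1 => beta a b c * (2%:Q) ^ (g a b (c - 1)) * common a b c
  | 2 => beta a b c * (2%:Q) ^ (g a b (c + 1) + r a c - (a - b)) * common a b c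
  | 3 => beta a b c * (2%:Q) ^ (g a b (c + 1) + r a c) * common a b c
  | _ => 0
  end.

From HB Require Import structures.
From mathcomp Require Import all_boot all_order all_algebra zify ring.
Set Implicit Arguments. Unset Strict Implicit. Unset Printing Implicit Defensive.
Import Order.TTheory GRing.Theory Num.Theory.
Local Open Scope ring_scope.

(* Each Phi_i, Psi_i is a monomial k * 2^E * 5^G * 11^Q whose exponents E, G
   have the shape (b - a)(b - c) + s(a - b) + H(a - c), while Q depends only on
   a - b + c.  For such exponents the two right-hand products of the recurrence
   carry the same exponent, and the left-hand product exceeds it by the second
   difference 1 + 2H(d) - H(d - 1) - H(d + 1) at d = a - c; for the floor
   functions H occurring here this is the indicator of one residue of d modulo 3.
   After cancelling the common monomial, the recurrence becomes an identity
   between the coefficients alpha, beta, which depend only on 3b + a - c modulo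
   6 and are checked residue by residue.  Part (b) follows from part (a) by the
   symmetry Psi_(4-i)(c, b, a) = Phi_i(a, b, c). *)

Definition pair_defect (f δ : int -> int -> int -> int) : Prop :=
  forall a b c,
    f (a - 1) (b - 1) c + f (a - 1) (b - 2) (c - 2)
      = f (a - 2) (b - 2) (c - 1) + f a (b - 1) (c - 1) /\
    f a b c + f (a - 2) (b - 3) (c - 2)
      = f (a - 1) (b - 1) c + f (a - 1) (b - 2) (c - 2) + δ a b c.

Section Monomials.

Variables (F : fieldType) (x y z : F).
Hypotheses (x_neq0 : x != 0) (y_neq0 : y != 0) (z_neq0 : z != 0).

Definition monomial (k : F) (e f h : int) : F := k * x ^ e * (y ^ f * z ^ h).

Lemma monomialM k e f h k' e' f' h' :
  monomial k e f h * monomial k' e' f' h' = monomial (k * k') (e + e') (f + f') (h + h').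
Proof. by rewrite /monomial !expfzDr //; ring. Qed.

Lemma monomial_exchange k0 k1 k2 e f h de df :
  k0 * x ^ de * y ^ df = k1 + k2 ->
  monomial k0 (e + de) (f + df) h = monomial k1 e f h + monomial k2 e f h.
Proof.
move=> hk.
have -> : monomial k1 e f h + monomial k2 e f h = (k1 + k2) * x ^ e * (y ^ f * z ^ h).
  by rewrite /monomial; ring.
by rewrite -hk /monomial !expfzDr //; ring.
Qed.

Lemma monomial_recurrence (P K : int -> int -> int -> F)
    (E G Q δE δG : int -> int -> int -> int) a b c :
  (forall a b c, P a b c = monomial (K a b c) (E a b c) (G a b c) (Q a b c)) ->
  pair_defect E δE -> pair_defect G δG -> pair_defect Q (fun _ _ _ => 0) ->
  K a b c * K (a - 2) (b - 3) (c - 2) * x ^ δE a b c * y ^ δG a b c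
    = K (a - 1) (b - 1) c * K (a - 1) (b - 2) (c - 2)
      + K (a - 2) (b - 2) (c - 1) * K a (b - 1) (c - 1) ->
  P a b c * P (a - 2) (b - 3) (c - 2)
    = P (a - 1) (b - 1) c * P (a - 1) (b - 2) (c - 2)
      + P (a - 2) (b - 2) (c - 1) * P a (b - 1) (c - 1).
Proof.
move=> PE hE hG hQ hK; rewrite !PE !monomialM.
have [E12 ->] := hE a b c; have [G12 ->] := hG a b c; have [Q12 ->] := hQ a b c.
by rewrite -E12 -G12 -Q12 addr0; apply: monomial_exchange.
Qed.

End Monomials.

Definition sqr_div3 (d : int) : int := ((d ^+ 2) %/ 3)%Z.
Definition phi_floor (d : int) : int := sqr_div3 (d + 1) - ((d + 1) %/ 3)%Z.
Definition psi_floor (d : int) : int := sqr_div3 (d - 1) + ((d + 1) %/ 3)%Z.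

Lemma mod3_cases (d : int) : exists k, d = 3 * k \/ d = 3 * k + 1 \/ d = 3 * k + 2.
Proof. exists (d %/ 3)%Z; lia. Qed.

Lemma sqr_div3E (d : int) : 3 * sqr_div3 d = d ^+ 2 - ((d %% 3)%Z != 0)%:Z.
Proof.
rewrite /sqr_div3; have [k [->|[->|->]]] := mod3_cases d.
- have -> : ((3 * k) %% 3)%Z = 0 by lia.
  lia.
- have -> : ((3 * k + 1) %% 3)%Z = 1 by lia.
  lia.
- have -> : ((3 * k + 2) %% 3)%Z = 2 by lia.
  lia.
Qed.

Lemma sqr_div3N (d : int) : sqr_div3 (- d) = sqr_div3 d.
Proof. by rewrite /sqr_div3 sqrrN. Qed.

Lemma sqr_div3_step (d : int) : sqr_div3 (d + 1) - sqr_div3 (d - 1) = d + ((d + 1) %/ 3)%Z.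
Proof. have := sqr_div3E (d + 1); have := sqr_div3E (d - 1); lia. Qed.

Lemma sqr_div3_defect (d : int) :
  1 + 2 * sqr_div3 d - sqr_div3 (d - 1) - sqr_div3 (d + 1) = ((d %% 3)%Z == 0)%:Z.
Proof. have := sqr_div3E d; have := sqr_div3E (d + 1); have := sqr_div3E (d - 1); lia. Qed.

Lemma phi_floor_defect (d : int) :
  1 + 2 * phi_floor d - phi_floor (d - 1) - phi_floor (d + 1) = ((d %% 3)%Z == 1)%:Z.
Proof.
rewrite /phi_floor; have := sqr_div3E (d + 1).
have := sqr_div3E (d - 1 + 1); have := sqr_div3E (d + 1 + 1); lia.
Qed.

Lemma psi_floor_defect (d : int) :
  1 + 2 * psi_floor d - psi_floor (d - 1) - psi_floor (d + 1) = ((d %% 3)%Z == 2)%:Z.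
Proof.
rewrite /psi_floor; have := sqr_div3E (d - 1).
have := sqr_div3E (d - 1 - 1); have := sqr_div3E (d + 1 - 1); lia.
Qed.

Lemma psi_floorN (d : int) : psi_floor (- d) = phi_floor d.
Proof. rewrite /psi_floor /phi_floor (_ : - d - 1 = - (d + 1)) ?sqr_div3N; [lia | ring]. Qed.

Definition exponent (s : int) (H : int -> int) (a b c : int) : int :=
  (b - a) * (b - c) + s * (a - b) + H (a - c).

Lemma exponent_defect (s : int) (H δ : int -> int) :
  (forall d : int, 1 + 2 * H d - H (d - 1) - H (d + 1) = δ d) ->
  pair_defect (exponent s H) (fun a b c => δ (a - c)).
Proof.
move=> hH a b c; rewrite /exponent -hH.
have -> : a - 2 - (c - 2) = a - c by ring.
have -> : a - 1 - c = a - c - 1 by ring.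
have -> : a - 1 - (c - 2) = a - c + 1 by ring.
have -> : a - 2 - (c - 1) = a - c - 1 by ring.
have -> : a - (c - 1) = a - c + 1 by ring.
by split; ring.
Qed.

Lemma exponent_mirror s H a b c :
  exponent s H c b a = exponent s (fun d => H (- d) - s * d) a b c.
Proof. by rewrite /exponent (_ : c - a = - (a - c)); ring. Qed.

Lemma q_defect : pair_defect q (fun _ _ _ => 0).
Proof.
move=> a b c; rewrite /q.
have -> : a - 2 - (b - 3) + (c - 2) = a - b + c - 1 by ring.
have -> : a - 1 - (b - 1) + c = a - b + c by ring.
have -> : a - 1 - (b - 2) + (c - 2) = a - b + c - 1 by ring.
have -> : a - 2 - (b - 2) + (c - 1) = a - b + c - 1 by ring.
have -> : a - (b - 1) + (c - 1) = a - b + c by ring.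
by split; ring.
Qed.

Definition Phi_exponent (i : nat) : int -> int -> int -> int :=
  match i with
  | 1 => exponent 1 (fun d => phi_floor d - d)
  | 2 => exponent 0 phi_floor
  | _ => exponent (-1) phi_floor
  end.

Definition Psi_exponent (i : nat) : int -> int -> int -> int :=
  match i with
  | 1 => exponent (-1) (fun d => psi_floor d + d)
  | 2 => exponent 0 psi_floor
  | _ => exponent 1 psi_floor
  end.

Lemma gE a b c : g a b c = exponent 0 sqr_div3 a b c.
Proof. by rewrite /exponent mul0r addr0. Qed.

Lemma g_succ a b c : g a b (c + 1) = exponent 1 (fun d => sqr_div3 (d - 1)) a b c.
Proof. by rewrite /g /exponent /sqr_div3 (_ : a - (c + 1) = a - c - 1); ring. Qed.

Lemma g_pred a b c : g a b (c - 1) = exponent (-1) (fun d => sqr_div3 (d + 1)) a b c.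
Proof. by rewrite /g /exponent /sqr_div3 (_ : a - (c - 1) = a - c + 1); ring. Qed.

Lemma PhiE i : (1 <= i <= 3)%N -> forall a b c,
  Phi i a b c = monomial 2%:Q 5%:Q 11%:Q
    (alpha a b c) (Phi_exponent i a b c) (exponent 0 sqr_div3 a b c) (q a b c).
Proof.
case: i => [|[|[|[|i]]]] // _ a b c; rewrite /Phi /Phi_exponent /common /monomial -gE.
- rewrite g_succ; congr (_ * _ ^ _ * _); rewrite /exponent.
  by have := sqr_div3_step (a - c); rewrite /phi_floor; lia.
- by rewrite g_pred /exponent /phi_floor /r; congr (_ * _ ^ _ * _); ring.
- by rewrite g_pred /exponent /phi_floor /r; congr (_ * _ ^ _ * _); ring.
Qed.

Lemma PsiE i : (1 <= i <= 3)%N -> forall a b c,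
  Psi i a b c = monomial 2%:Q 5%:Q 11%:Q
    (beta a b c) (Psi_exponent i a b c) (exponent 0 sqr_div3 a b c) (q a b c).
Proof.
case: i => [|[|[|[|i]]]] // _ a b c; rewrite /Psi /Psi_exponent /common /monomial -gE.
- rewrite g_pred; congr (_ * _ ^ _ * _); rewrite /exponent.
  by have := sqr_div3_step (a - c); rewrite /psi_floor; lia.
- by rewrite g_succ /exponent /psi_floor /r; congr (_ * _ ^ _ * _); ring.
- by rewrite g_succ /exponent /psi_floor /r; congr (_ * _ ^ _ * _); ring.
Qed.

Lemma g_exponent_defect :
  pair_defect (exponent 0 sqr_div3) (fun a b c => (((a - c) %% 3)%Z == 0)%:Z).
Proof. exact: exponent_defect sqr_div3_defect. Qed.

Lemma Phi_exponent_defect i :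
  pair_defect (Phi_exponent i) (fun a b c => (((a - c) %% 3)%Z == 1)%:Z).
Proof.
by case: i => [|[|[|i]]];
  apply: (@exponent_defect _ _ (fun d => ((d %% 3)%Z == 1)%:Z)) => d /=;
  have := phi_floor_defect d; lia.
Qed.

Lemma Psi_exponent_defect i :
  pair_defect (Psi_exponent i) (fun a b c => (((a - c) %% 3)%Z == 2)%:Z).
Proof.
by case: i => [|[|[|i]]];
  apply: (@exponent_defect _ _ (fun d => ((d %% 3)%Z == 2)%:Z)) => d /=;
  have := psi_floor_defect d; lia.
Qed.

Lemma mod6_ind (P : int -> Prop) (n : int) :
  P 0 -> P 1 -> P 2 -> P 3 -> P 4 -> P 5 -> P (n %% 6)%Z.
Proof.
have : (0 <= n %% 6 < 6)%Z by lia.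
move: (n %% 6)%Z => m hm.
by have [->|[->|[->|[->|[->|->]]]]] :
  m = 0 \/ m = 1 \/ m = 2 \/ m = 3 \/ m = 4 \/ m = 5 by lia.
Qed.

Lemma shifted_weights a b c (m := ((3 * b + a - c) %% 6)%Z) :
  ((a - c) %% 3 = m %% 3)%Z /\
  [/\ ((3 * (b - 3) + (a - 2) - (c - 2)) %% 6 = (m - 9) %% 6)%Z,
      ((3 * (b - 1) + (a - 1) - c) %% 6 = (m - 4) %% 6)%Z,
      ((3 * (b - 2) + (a - 1) - (c - 2)) %% 6 = (m - 5) %% 6)%Z,
      ((3 * (b - 2) + (a - 2) - (c - 1)) %% 6 = (m - 7) %% 6)%Z &
      ((3 * (b - 1) + a - (c - 1)) %% 6 = (m - 2) %% 6)%Z].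
Proof. by split; [lia | split; lia]. Qed.

Lemma alpha_recurrence a b c :
  alpha a b c * alpha (a - 2) (b - 3) (c - 2)
    * 2%:Q ^ (((a - c) %% 3)%Z == 1)%:Z * 5%:Q ^ (((a - c) %% 3)%Z == 0)%:Z
  = alpha (a - 1) (b - 1) c * alpha (a - 1) (b - 2) (c - 2)
    + alpha (a - 2) (b - 2) (c - 1) * alpha a (b - 1) (c - 1).
Proof.
rewrite /alpha; case: (shifted_weights a b c) => -> [-> -> -> -> ->].
by elim/mod6_ind: ((3 * b + a - c) %% 6)%Z; apply/eqP; vm_compute.
Qed.

Lemma beta_recurrence a b c :
  beta a b c * beta (a - 2) (b - 3) (c - 2)
    * 2%:Q ^ (((a - c) %% 3)%Z == 2)%:Z * 5%:Q ^ (((a - c) %% 3)%Z == 0)%:Z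
  = beta (a - 1) (b - 1) c * beta (a - 1) (b - 2) (c - 2)
    + beta (a - 2) (b - 2) (c - 1) * beta a (b - 1) (c - 1).
Proof.
rewrite /beta; case: (shifted_weights a b c) => -> [-> -> -> -> ->].
by elim/mod6_ind: ((3 * b + a - c) %% 6)%Z; apply/eqP; vm_compute.
Qed.

Lemma beta_mirror a b c : beta c b a = alpha a b c.
Proof.
rewrite /alpha /beta.
rewrite (_ : (3 * b + c - a) %% 6 = (- ((3 * b + a - c) %% 6)%Z) %% 6)%Z; last lia.
by elim/mod6_ind: ((3 * b + a - c) %% 6)%Z; apply/eqP; vm_compute.
Qed.

Lemma Phi_recurrence i : (1 <= i <= 3)%N -> forall a b c,
  Phi i a b c * Phi i (a - 2) (b - 3) (c - 2)
    = Phi i (a - 1) (b - 1) c * Phi i (a - 1) (b - 2) (c - 2)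
      + Phi i (a - 2) (b - 2) (c - 1) * Phi i a (b - 1) (c - 1).
Proof.
by move=> hi a b c; apply: (monomial_recurrence _ _ _ (PhiE hi) (Phi_exponent_defect i)
  g_exponent_defect q_defect (alpha_recurrence a b c)).
Qed.

Lemma Psi_recurrence i : (1 <= i <= 3)%N -> forall a b c,
  Psi i a b c * Psi i (a - 2) (b - 3) (c - 2)
    = Psi i (a - 1) (b - 1) c * Psi i (a - 1) (b - 2) (c - 2)
      + Psi i (a - 2) (b - 2) (c - 1) * Psi i a (b - 1) (c - 1).
Proof.
by move=> hi a b c; apply: (monomial_recurrence _ _ _ (PsiE hi) (Psi_exponent_defect i)
  g_exponent_defect q_defect (beta_recurrence a b c)).
Qed.

Lemma Psi_mirror i : (1 <= i <= 3)%N -> forall a b c, Psi (4 - i) c b a = Phi i a b c.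
Proof.
move=> hi a b c; have hi' : (1 <= 4 - i <= 3)%N by case: i hi => [|[|[|[|i]]]].
rewrite (PsiE hi') (PhiE hi) /monomial beta_mirror.
congr (_ * 2%:Q ^ _ * (5%:Q ^ _ * 11%:Q ^ _)).
- case: i {hi'} hi => [|[|[|[|i]]]] // _;
    by rewrite subnE /= exponent_mirror /exponent /= psi_floorN; ring.
- by rewrite exponent_mirror /exponent /= sqr_div3N; ring.
- by rewrite /q; congr (_ ^+ 2 %/ 4)%Z; ring.
Qed.

Lemma Phi_mirror i : (1 <= i <= 3)%N -> forall a b c, Phi (4 - i) c b a = Psi i a b c.
Proof.
move=> hi a b c; have hi' : (1 <= 4 - i <= 3)%N by case: i hi => [|[|[|[|i]]]].
by rewrite -(Psi_mirror hi') subKn //; case/andP: hi => _ /leqW.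
Qed.

Theorem lemma4p3 :
  forall (i : nat), (1 <= i <= 3)%N -> forall a b c : int,
    (* (a) *)
    Phi i a b c * Phi i (a - 2) (b - 3) (c - 2) =
      Phi i (a - 1) (b - 1) c * Phi i (a - 1) (b - 2) (c - 2)
      + Phi i (a - 2) (b - 2) (c - 1) * Phi i a (b - 1) (c - 1) /\
    Psi i a b c * Psi i (a - 2) (b - 3) (c - 2) =
      Psi i (a - 1) (b - 1) c * Psi i (a - 1) (b - 2) (c - 2)
      + Psi i (a - 2) (b - 2) (c - 1) * Psi i a (b - 1) (c - 1) /\
    (* (b) *)
    Phi i a b c * Phi i (a - 2) (b - 3) (c - 2) =
      Psi (4 - i) c (b - 1) (a - 1) * Phi i (a - 1) (b - 2) (c - 2)
      + Phi i (a - 2) (b - 2) (c - 1) * Phi i a (b - 1) (c - 1) /\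
    Psi i a b c * Psi i (a - 2) (b - 3) (c - 2) =
      Phi (4 - i) c (b - 1) (a - 1) * Psi i (a - 1) (b - 2) (c - 2)
      + Psi i (a - 2) (b - 2) (c - 1) * Psi i a (b - 1) (c - 1).
Proof.
move=> i hi a b c; rewrite (Psi_mirror hi) (Phi_mirror hi).
have hPhi := Phi_recurrence hi a b c; have hPsi := Psi_recurrence hi a b c.
by do !split.
Qed.
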